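(* Let $\Gamma=(\mathcal{V},\mathcal{H})$ be an oriented hypergraph with normalized Laplacian $L$. If $\Gamma$ has $\hat{n}$ vertices that are pairwise twins, then $0$ is an eigenvalue of $L$ with multiplicity at least $\hat{n}-1$. Furthermore, if $v_i$ and $v_j$ are twin vertices and $f:\mathcal{V}\to\mathbb{R}$ is an eigenfunction of $L$ with eigenvalue $\lambda\neq 0$, then $f(v_i)=f(v_j)$.
   Context: An oriented hypergraph is a pair $\Gamma=(\mathcal{V},\mathcal{H})$ where $\mathcal{V}=\{v_1,\ldots,v_N\}$ is a finite set and each hyperedge $h$ is a pair $(h_{in},h_{out})$ of disjoint nonempty subsets of $\mathcal{V}$; standing assumption: no isolated vertices. Vertices are co-oriented in $h$ if they lie in the same one of $h_{in},h_{out}$, anti-oriented if in different ones. $\deg(v)$ is the number of hyperedges containing $v$, $D$ the diagonal degree matrix; the adjacency matrix has $A_{ii}=0$ and $A_{ij}=\#\{h: v_i,v_j\text{ anti-oriented in }h\}-\#\{h:v_i,v_j\text{ co-oriented in }h\}$ for $i\ne j$; $L=\mathrm{Id}-D^{-1}A$, acting on functions $f:\mathcal{V}\to\mathbb{R}$ by $Lf(v_i)=f(v_i)-\frac{1}{\deg v_i}\sum_{j} A_{ij}f(v_j)$. Two vertices are twins if they belong to exactly the same hyperedges and, in each such hyperedge, are co-oriented (so $A_{ij}=-\deg v_i=-\deg v_j$ and $A_{ik}=A_{jk}$ for $k\ne i,j$). *)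

From HB Require Import structures.
From mathcomp Require Import all_boot all_order all_algebra.
Set Implicit Arguments. Unset Strict Implicit. Unset Printing Implicit Defensive.
Import Order.TTheory GRing.Theory Num.Theory.
Local Open Scope ring_scope.

(* An oriented hypergraph on vertex set 'I_N with hyperedges indexed by a
   finite type Hh: hyperedge h is the pair (hin h, hout h). *)
Definition oriented_hypergraph (N : nat) (Hh : finType)
  (hin hout : Hh -> {set 'I_N}) : Prop :=
  (forall h, [disjoint hin h & hout h]) /\
  (forall h, hin h != set0) /\ (forall h, hout h != set0).

Definition no_isolated (N : nat) (Hh : finType) (hin hout : Hh -> {set 'I_N}) : Prop :=
  forall v : 'I_N, exists h, v \in hin h :|: hout h.

Definition hdeg (N : nat) (Hh : finType) (hin hout : Hh -> {set 'I_N}) (v : 'I_N) : nat :=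
  #|[set h | v \in hin h :|: hout h]|.

Definition co_edges (N : nat) (Hh : finType) (hin hout : Hh -> {set 'I_N}) (i j : 'I_N) :=
  [set h | ((i \in hin h) && (j \in hin h)) || ((i \in hout h) && (j \in hout h))].
Definition anti_edges (N : nat) (Hh : finType) (hin hout : Hh -> {set 'I_N}) (i j : 'I_N) :=
  [set h | ((i \in hin h) && (j \in hout h)) || ((i \in hout h) && (j \in hin h))].

Definition adjmx (R : ringType) (N : nat) (Hh : finType) (hin hout : Hh -> {set 'I_N})
  : 'M[R]_N :=
  \matrix_(i, j) (if i == j then 0
                  else (#|anti_edges hin hout i j|%:R - #|co_edges hin hout i j|%:R)).

Definition laplacian (R : fieldType) (N : nat) (Hh : finType) (hin hout : Hh -> {set 'I_N})
  : 'M[R]_N :=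
  \matrix_(i, j) ((i == j)%:R - (hdeg hin hout i)%:R^-1 * adjmx R hin hout i j).

Definition twins (N : nat) (Hh : finType) (hin hout : Hh -> {set 'I_N}) (i j : 'I_N) : Prop :=
  forall h, ((i \in hin h) = (j \in hin h)) /\ ((i \in hout h) = (j \in hout h)).

From HB Require Import structures.
From mathcomp Require Import all_boot all_order all_algebra.
Import Order.TTheory GRing.Theory Num.Theory.
Local Open Scope ring_scope.

(* Twins i, j have the same degree and the same adjacency to every third
   vertex, while A_ij = -deg i; hence rows i and j of L = Id - D^-1 A coincide.
   Consequently e_i - e_j is a left null vector of L, giving #|S| - 1
   independent null vectors for a twin class S, and (L f)_i = (L f)_j forces
   lambda f_i = lambda f_j for every eigenvector f. *)

Lemma equal_rows_rank_eigenspace0 (F : fieldType) n (A : 'M[F]_n) (S : {set 'I_n}) :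
  {in S &, forall i j, row i A = row j A} -> (#|S|.-1 <= \rank (eigenspace A 0))%N.
Proof.
move=> eqS; have [->|[s0 s0S]] := set_0Vmem S; first by rewrite cards0.
rewrite (cardsD1 s0 S) s0S add1n; set S' := S :\ s0.
pose e : 'I_#|S'| -> 'I_n := enum_val.
have eS' r : e r \in S' := enum_valP r.
pose B := \matrix_r (delta_mx 0 (e r) - delta_mx 0 s0 : 'rV[F]_n).
have Bfree : row_free B.
  apply/row_freeP; exists (\matrix_(k, r) (k == e r)%:R).
  apply/row_matrixP => r; rewrite row_mul rowK mulmxBl -!rowE.
  apply/rowP => r'; rewrite !mxE (inj_eq enum_val_inj).
  by have /setD1P[/negPf ne _] := eS' r'; rewrite [s0 == _]eq_sym ne subr0.
have B_null : (B <= eigenspace A 0)%MS.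
  apply/eigenspaceP; rewrite scale0r; apply/row_matrixP => r.
  have /setD1P[_ erS] := eS' r.
  by rewrite row_mul rowK mulmxBl -!rowE (eqS _ _ erS s0S) subrr row0.
by rewrite -(eqP Bfree) mxrankS.
Qed.

Lemma eigenvector_eq_at_equal_rows (F : fieldType) n (A : 'M[F]_n) (f : 'cV[F]_n)
    (lambda : F) i j :
  row i A = row j A -> lambda != 0 -> A *m f = lambda *: f -> f i 0 = f j 0.
Proof.
move=> eq_ij l0 Af; have /rowP/(_ 0) := congr1 (mulmx^~ f) eq_ij.
by rewrite -!row_mul Af !mxE => /(mulfI l0).
Qed.

Section Twins.
Variables (N : nat) (Hh : finType) (hin hout : Hh -> {set 'I_N}).

Local Notation twins := (twins hin hout).
Local Notation hdeg := (hdeg hin hout).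

Lemma twins_sym {i j} : twins i j -> twins j i.
Proof. by move=> Tij h; have [-> ->] := Tij h. Qed.

Lemma twins_hdeg {i j} : twins i j -> hdeg i = hdeg j.
Proof. by move=> Tij; apply: eq_card => h; rewrite !inE; have [-> ->] := Tij h. Qed.

Lemma twins_co_edges {i j} k : twins i j -> co_edges hin hout i k = co_edges hin hout j k.
Proof. by move=> Tij; apply/setP => h; rewrite !inE; have [-> ->] := Tij h. Qed.

Lemma twins_anti_edges {i j} k :
  twins i j -> anti_edges hin hout i k = anti_edges hin hout j k.
Proof. by move=> Tij; apply/setP => h; rewrite !inE; have [-> ->] := Tij h. Qed.

Lemma no_isolated_hdeg_neq0 : no_isolated hin hout -> forall v, hdeg v != 0%N.
Proof.
move=> noiso v; have [h vh] := noiso v.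
by rewrite -lt0n card_gt0; apply/set0Pn; exists h; rewrite inE.
Qed.

Lemma laplacian_diag (R : fieldType) i : laplacian R hin hout i i = 1.
Proof. by rewrite !mxE !eqxx mulr0 subr0. Qed.

Hypothesis hedge_disjoint : forall h, [disjoint hin h & hout h].

Lemma twins_adjmx (R : nzRingType) {i j} : twins i j -> i != j ->
  adjmx R hin hout i j = - (hdeg i)%:R.
Proof.
move=> Tij nij; rewrite mxE (negbTE nij).
have -> : anti_edges hin hout i j = set0.
  apply/setP => h; rewrite !inE; have [<- <-] := Tij h.
  by case iin: (i \in hin h); rewrite ?(disjointFr (hedge_disjoint h) iin) ?andbF.
have -> : co_edges hin hout i j = [set h | i \in hin h :|: hout h].
  by apply/setP => h; rewrite !inE; have [<- <-] := Tij h; rewrite !andbb.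
by rewrite cards0 sub0r.
Qed.

Hypothesis hdeg_neq0 : forall v, hdeg v != 0%N.

Lemma twins_laplacian (R : numFieldType) i j : twins i j -> laplacian R hin hout i j = 1.
Proof.
move=> Tij; have [<-|nij] := eqVneq i j; first exact: laplacian_diag.
rewrite mxE (twins_adjmx R Tij nij) (negbTE nij) sub0r mulrN opprK mulVf //.
by rewrite pnatr_eq0.
Qed.

Lemma twins_laplacian_row (R : numFieldType) i j :
  twins i j -> row i (laplacian R hin hout) = row j (laplacian R hin hout).
Proof.
move=> Tij; apply/rowP => k; rewrite [LHS]mxE [RHS]mxE.
have [->|nki] := eqVneq k i.
  by rewrite laplacian_diag twins_laplacian //; apply: twins_sym.
have [->|nkj] := eqVneq k j; first by rewrite laplacian_diag twins_laplacian.
rewrite !mxE ![_ == k]eq_sym (negbTE nki) (negbTE nkj).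
by rewrite (twins_co_edges k Tij) (twins_anti_edges k Tij) (twins_hdeg Tij).
Qed.

End Twins.

Theorem mainTheorem4 (R : realFieldType) (N : nat) (Hh : finType)
  (hin hout : Hh -> {set 'I_N}) :
  oriented_hypergraph hin hout -> no_isolated hin hout ->
  (forall S : {set 'I_N},
     {in S &, forall i j, i != j -> twins hin hout i j} ->
     (#|S|.-1 <= \rank (eigenspace (laplacian R hin hout) 0))%N)
  /\
  (forall (i j : 'I_N), twins hin hout i j ->
     forall (lambda : R) (f : 'cV[R]_N), lambda != 0 -> f != 0 ->
       laplacian R hin hout *m f = lambda *: f -> f i 0 = f j 0).
Proof.
move=> [disj _] /no_isolated_hdeg_neq0 deg_neq0.
have rowL := @twins_laplacian_row _ _ _ _ disj deg_neq0 R.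
split=> [S twinS | i j Tij lambda f l0 _].
- apply: equal_rows_rank_eigenspace0 => i j iS jS.
  have [<-//|nij] := eqVneq i j.
  exact: rowL (twinS _ _ iS jS nij).
- exact: eigenvector_eq_at_equal_rows (rowL _ _ Tij) l0.
Qed.
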